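(* Consider the two ''pruning relations'' among directed graphs on vertex set $[n]$ (for distinct $i,j,k$): (Pruning V) $\{(i,j),(i,k)\} = \{(i,j),(j,k)\} - \{(i,k),(k,j)\}$, and (Pruning A) $\{(i,k),(j,k)\} = \{(i,j),(j,k)\} - \{(j,i),(i,k)\}$, whose left-hand term is called the join term. A multiple of one of these relations is obtained by adding the same set $E$ of additional directed edges to each of its three terms, such that none of the three resulting graphs contains a loop (a cycle of the underlying undirected multigraph, oriented or not). Then in every multiple of either pruning relation, the term built from the join term has defect strictly larger than the defect of each of the other two terms.
   Context: For a directed forest (a directed graph whose underlying undirected multigraph has no cycles), a pair of distinct vertices in the same connected component is unordered if there is no directed path of edges from one to the other. The defect of a tree is its number of unordered pairs of vertices, and the defect of a forest is the sum of the defects of its connected components. *)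

From mathcomp Require Import all_boot.
Set Implicit Arguments. Unset Strict Implicit. Unset Printing Implicit Defensive.

(* A directed (multi)graph on vertex set [n] = 'I_n is given by a list of
   directed edges (u, v) : 'I_n * 'I_n (a list, so that repeated edges are
   kept as parallel edges of the multigraph). *)
Definition dedge (n : nat) := ('I_n * 'I_n)%type.

Definition urel n (es : seq (dedge n)) : rel 'I_n :=
  fun u v => has (fun e : dedge n =>
    ((e.1 == u) && (e.2 == v)) || ((e.1 == v) && (e.2 == u))) es.

Definition drel n (es : seq (dedge n)) : rel 'I_n := fun u v => (u, v) \in es.

(* The underlying undirected multigraph has no cycle (oriented or not):
   every edge (occurrence) is a bridge, i.e. its endpoints are not connected
   by the remaining edges.  A self-loop or a pair of parallel / antiparallel
   edges is a cycle and is excluded by this definition. *)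
Definition is_forest n (es : seq (dedge n)) : Prop :=
  forall (s1 s2 : seq (dedge n)) (e : dedge n),
    es = s1 ++ e :: s2 -> ~~ connect (urel (s1 ++ s2)) e.1 e.2.

(* Defect: number of unordered pairs {u,v} of distinct vertices in the same
   connected component with no directed path from one to the other.  (Sum
   over components of the per-tree defect = count over all such pairs.) *)
Definition defect n (es : seq (dedge n)) : nat :=
  #|[set p : 'I_n * 'I_n | [&& (p.1 < p.2)%N,
       connect (urel es) p.1 p.2,
       ~~ connect (drel es) p.1 p.2 &
       ~~ connect (drel es) p.2 p.1]]|.

Definition add_edges n (base : seq (dedge n)) (E : {set dedge n}) : seq (dedge n) :=
  base ++ enum E.

Definition pruneV_join n (i j k : 'I_n) : seq (dedge n) := [:: (i, j); (i, k)].
Definition pruneV_t1 n (i j k : 'I_n) : seq (dedge n) := [:: (i, j); (j, k)].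
Definition pruneV_t2 n (i j k : 'I_n) : seq (dedge n) := [:: (i, k); (k, j)].

Definition pruneA_join n (i j k : 'I_n) : seq (dedge n) := [:: (i, k); (j, k)].
Definition pruneA_t1 n (i j k : 'I_n) : seq (dedge n) := [:: (i, j); (j, k)].
Definition pruneA_t2 n (i j k : 'I_n) : seq (dedge n) := [:: (j, i); (i, k)].

(* In a forest, the two edges of the join term of Pruning V leave a common
   vertex i towards j and k, so j and k lie in one tree but no directed path
   joins them: such a path would stay on one side of the bridge (i,j) (or
   (i,k)) and thus close a cycle.  Dually for the two edges of Pruning A
   entering k, with i and j.  Every edge of another term joins vertices
   connected in the join term, and every edge of the join term is a directed
   path in that other term, so its unordered pairs are unordered pairs of the
   join term; the inclusion is strict because it makes the pair {j,k} (resp.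
   {i,j}) comparable. *)

From mathcomp Require Import all_boot.
Set Implicit Arguments. Unset Strict Implicit. Unset Printing Implicit Defensive.

Section Defect.
Variable n : nat.
Implicit Types (es ts : seq (dedge n)) (E : {set dedge n}).

Lemma urel_sym es : symmetric (urel es).
Proof. by move=> x y; apply/hasP/hasP => -[e he H]; exists e; rewrite // orbC. Qed.

Lemma connect_urelC es (x y : 'I_n) :
  connect (urel es) x y = connect (urel es) y x.
Proof. exact: (sym_connect_sym (@urel_sym es)). Qed.

Lemma urel_edge es (x y : 'I_n) : (x, y) \in es -> urel es x y.
Proof. by move=> exy; apply/hasP; exists (x, y); rewrite //= !eqxx. Qed.

Lemma connect_urel_edge es (x y : 'I_n) : (x, y) \in es -> connect (urel es) x y.
Proof. by move=> exy; apply/connect1/urel_edge. Qed.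

Lemma drel_split (s1 s2 : seq (dedge n)) (a b x y : 'I_n) :
  drel (s1 ++ (a, b) :: s2) x y -> (x, y) = (a, b) \/ urel (s1 ++ s2) x y.
Proof.
rewrite /drel !mem_cat inE => /or3P[h|/eqP->|h]; [right|by left|right];
  by apply: urel_edge; rewrite mem_cat h ?orbT.
Qed.

Lemma connect_drel_from_head (s1 s2 : seq (dedge n)) (a b x : 'I_n) :
  ~~ connect (urel (s1 ++ s2)) a b ->
  connect (drel (s1 ++ (a, b) :: s2)) b x -> connect (urel (s1 ++ s2)) b x.
Proof.
move=> nab /connectP[p bp ->]; move: (connect0 (urel (s1 ++ s2)) b) bp.
elim: p {2 4 6}b => [|z p IH] y by0 //= /andP[/drel_split[[ya _]|yz]]; last first.
  by apply: IH; apply: connect_trans by0 (connect1 yz).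
by rewrite -ya connect_urelC by0 in nab.
Qed.

Lemma connect_drel_to_tail (s1 s2 : seq (dedge n)) (a b x : 'I_n) :
  ~~ connect (urel (s1 ++ s2)) a b ->
  connect (drel (s1 ++ (a, b) :: s2)) x a -> connect (urel (s1 ++ s2)) x a.
Proof.
move=> nab /connectP[p]; elim: p x => [|z p IH] y /=; first by move=> _ ->.
case/andP=> /drel_split[[_ ->]|yz] /IH za /za; last exact: connect_trans (connect1 yz).
by rewrite connect_urelC => ab; rewrite ab in nab.
Qed.

Lemma nconnect_drel_out_fork (s1 s2 : seq (dedge n)) (a b c : 'I_n) :
  ~~ connect (urel (s1 ++ s2)) a b -> (a, c) \in s1 ++ s2 ->
  ~~ connect (drel (s1 ++ (a, b) :: s2)) b c.
Proof.
move=> nab ac; apply/negP => /(connect_drel_from_head nab) bc; case/negP: nab.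
by apply: connect_trans (connect_urel_edge ac) _; rewrite connect_urelC.
Qed.

Lemma nconnect_drel_in_fork (s1 s2 : seq (dedge n)) (a b c : 'I_n) :
  ~~ connect (urel (s1 ++ s2)) b c -> (a, c) \in s1 ++ s2 ->
  ~~ connect (drel (s1 ++ (b, c) :: s2)) a b.
Proof.
move=> nbc ac; apply/negP => /(connect_drel_to_tail nbc) ab; case/negP: nbc.
by apply: connect_trans (connect_urel_edge ac); rewrite connect_urelC.
Qed.

Definition unordered_pairs es : {set 'I_n * 'I_n} :=
  [set p : 'I_n * 'I_n | [&& p.1 < p.2, connect (urel es) p.1 p.2,
              ~~ connect (drel es) p.1 p.2 & ~~ connect (drel es) p.2 p.1]].

Lemma defectE es : defect es = #|unordered_pairs es|.
Proof. by []. Qed.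

Lemma unordered_pairs_sub es ts :
  (forall e, e \in ts -> connect (urel es) e.1 e.2) ->
  (forall e, e \in es -> connect (drel ts) e.1 e.2) ->
  unordered_pairs ts \subset unordered_pairs es.
Proof.
move=> tsU esD.
have subU : subrel (connect (urel ts)) (connect (urel es)).
  apply: connect_sub => x y /hasP[e /tsU ce].
  by case/orP=> /andP[/eqP<- /eqP<-]; last rewrite connect_urelC.
have subD : subrel (connect (drel es)) (connect (drel ts)).
  by apply: connect_sub => x y /(esD (x, y)).
apply/subsetP => p; rewrite !inE => /and4P[-> /subU-> xy yx] /=.
by rewrite (contra (subD _ _) xy) (contra (subD _ _) yx).
Qed.

Lemma defect_lt es ts (u v : 'I_n) :
  (forall e, e \in ts -> connect (urel es) e.1 e.2) ->
  (forall e, e \in es -> connect (drel ts) e.1 e.2) ->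
  u != v -> connect (urel es) u v ->
  ~~ connect (drel es) u v -> ~~ connect (drel es) v u ->
  connect (drel ts) u v ->
  defect ts < defect es.
Proof.
move=> tsU esD nuv cuv nuv' nvu' tuv; rewrite !defectE.
apply/proper_card/properP; split; first exact: unordered_pairs_sub.
have [uv|vu|/val_inj uv] := ltngtP u v; last by rewrite uv eqxx in nuv.
- by exists (u, v); rewrite inE /= ?uv ?cuv ?nuv' ?nvu' ?tuv ?andbF.
- by exists (v, u); rewrite inE /= ?vu 1?connect_urelC ?cuv ?nuv' ?nvu' ?tuv ?andbF.
Qed.

Lemma add_edges_urel (b b' : seq (dedge n)) E :
  (forall e, e \in b -> connect (urel (add_edges b' E)) e.1 e.2) ->
  forall e, e \in add_edges b E -> connect (urel (add_edges b' E)) e.1 e.2.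
Proof.
move=> bU [x y]; rewrite mem_cat => /orP[/bU //|xy].
by apply: connect_urel_edge; rewrite mem_cat xy orbT.
Qed.

Lemma add_edges_drel (b b' : seq (dedge n)) E :
  (forall e, e \in b -> connect (drel (add_edges b' E)) e.1 e.2) ->
  forall e, e \in add_edges b E -> connect (drel (add_edges b' E)) e.1 e.2.
Proof.
move=> bD [x y]; rewrite mem_cat => /orP[/bD //|xy].
by apply: connect1; rewrite /drel mem_cat xy orbT.
Qed.

Lemma mem_add_edges_fst (e1 e2 : dedge n) E : e1 \in add_edges [:: e1; e2] E.
Proof. by rewrite mem_cat mem_head. Qed.

Lemma mem_add_edges_snd (e1 e2 : dedge n) E : e2 \in add_edges [:: e1; e2] E.
Proof. by rewrite mem_cat !inE eqxx orbT. Qed.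

Lemma pruneV_defect_lt (i j k : 'I_n) E :
  j != k -> is_forest (add_edges (pruneV_join i j k) E) ->
  defect (add_edges (pruneV_t1 i j k) E) < defect (add_edges (pruneV_join i j k) E) /\
  defect (add_edges (pruneV_t2 i j k) E) < defect (add_edges (pruneV_join i j k) E).
Proof.
move=> njk forestJ; set J := add_edges (pruneV_join i j k) E.
have nJjk : ~~ connect (drel J) j k.
  exact: (nconnect_drel_out_fork (forestJ [::] ((i, k) :: enum E) _ erefl) (mem_head _ _)).
have nJkj : ~~ connect (drel J) k j.
  exact: (nconnect_drel_out_fork (forestJ [:: (i, j)] (enum E) _ erefl) (mem_head _ _)).
have Jij : connect (urel J) i j := connect_urel_edge (mem_add_edges_fst _ _ _).
have Jik : connect (urel J) i k := connect_urel_edge (mem_add_edges_snd _ _ _).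
have Jjk : connect (urel J) j k.
  by apply: connect_trans Jik; rewrite connect_urelC.
split.
- have T1ij : connect (drel (add_edges (pruneV_t1 i j k) E)) i j.
    by apply: connect1; apply: mem_add_edges_fst.
  have T1jk : connect (drel (add_edges (pruneV_t1 i j k) E)) j k.
    by apply: connect1; apply: mem_add_edges_snd.
  apply: (defect_lt _ _ njk Jjk nJjk nJkj T1jk).
    by apply: add_edges_urel => e; rewrite !inE => /orP[]/eqP-> //=.
  apply: add_edges_drel => e; rewrite !inE => /orP[]/eqP-> //=.
  exact: connect_trans T1ij T1jk.
- have T2ik : connect (drel (add_edges (pruneV_t2 i j k) E)) i k.
    by apply: connect1; apply: mem_add_edges_fst.
  have T2kj : connect (drel (add_edges (pruneV_t2 i j k) E)) k j.
    by apply: connect1; apply: mem_add_edges_snd.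
  rewrite eq_sym in njk; rewrite connect_urelC in Jjk.
  apply: (defect_lt _ _ njk Jjk nJkj nJjk T2kj).
    by apply: add_edges_urel => e; rewrite !inE => /orP[]/eqP-> //=.
  apply: add_edges_drel => e; rewrite !inE => /orP[]/eqP-> //=.
  exact: connect_trans T2ik T2kj.
Qed.

Lemma pruneA_defect_lt (i j k : 'I_n) E :
  i != j -> is_forest (add_edges (pruneA_join i j k) E) ->
  defect (add_edges (pruneA_t1 i j k) E) < defect (add_edges (pruneA_join i j k) E) /\
  defect (add_edges (pruneA_t2 i j k) E) < defect (add_edges (pruneA_join i j k) E).
Proof.
move=> nij forestJ; set J := add_edges (pruneA_join i j k) E.
have nJij : ~~ connect (drel J) i j.
  exact: (nconnect_drel_in_fork (forestJ [:: (i, k)] (enum E) _ erefl) (mem_head _ _)).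
have nJji : ~~ connect (drel J) j i.
  exact: (nconnect_drel_in_fork (forestJ [::] ((j, k) :: enum E) _ erefl) (mem_head _ _)).
have Jik : connect (urel J) i k := connect_urel_edge (mem_add_edges_fst _ _ _).
have Jjk : connect (urel J) j k := connect_urel_edge (mem_add_edges_snd _ _ _).
have Jij : connect (urel J) i j.
  by apply: connect_trans Jik _; rewrite connect_urelC.
split.
- have T1ij : connect (drel (add_edges (pruneA_t1 i j k) E)) i j.
    by apply: connect1; apply: mem_add_edges_fst.
  have T1jk : connect (drel (add_edges (pruneA_t1 i j k) E)) j k.
    by apply: connect1; apply: mem_add_edges_snd.
  apply: (defect_lt _ _ nij Jij nJij nJji T1ij).
    by apply: add_edges_urel => e; rewrite !inE => /orP[]/eqP-> //=.
  apply: add_edges_drel => e; rewrite !inE => /orP[]/eqP-> //=.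
  exact: connect_trans T1ij T1jk.
- have T2ji : connect (drel (add_edges (pruneA_t2 i j k) E)) j i.
    by apply: connect1; apply: mem_add_edges_fst.
  have T2ik : connect (drel (add_edges (pruneA_t2 i j k) E)) i k.
    by apply: connect1; apply: mem_add_edges_snd.
  rewrite eq_sym in nij; rewrite connect_urelC in Jij.
  apply: (defect_lt _ _ nij Jij nJji nJij T2ji).
    by apply: add_edges_urel => e; rewrite !inE => /orP[]/eqP-> //=.
  apply: add_edges_drel => e; rewrite !inE => /orP[]/eqP-> //=.
  exact: connect_trans T2ji T2ik.
Qed.

End Defect.

Theorem lemma5p10 (n : nat) (i j k : 'I_n) (E : {set 'I_n * 'I_n}) :
  i != j -> j != k -> i != k ->
  (is_forest (add_edges (pruneV_join i j k) E) ->
   is_forest (add_edges (pruneV_t1 i j k) E) ->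
   is_forest (add_edges (pruneV_t2 i j k) E) ->
   defect (add_edges (pruneV_t1 i j k) E) < defect (add_edges (pruneV_join i j k) E) /\
   defect (add_edges (pruneV_t2 i j k) E) < defect (add_edges (pruneV_join i j k) E)) /\
  (is_forest (add_edges (pruneA_join i j k) E) ->
   is_forest (add_edges (pruneA_t1 i j k) E) ->
   is_forest (add_edges (pruneA_t2 i j k) E) ->
   defect (add_edges (pruneA_t1 i j k) E) < defect (add_edges (pruneA_join i j k) E) /\
   defect (add_edges (pruneA_t2 i j k) E) < defect (add_edges (pruneA_join i j k) E)).
Proof.
move=> nij njk _; split=> [forestJ _ _ | forestJ _ _].
- exact: pruneV_defect_lt.
- exact: pruneA_defect_lt.
Qed.
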